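(* Let $K\to K'$ be an algebraically pure morphism of fields and $x=(x_1,\ldots,x_n)$. Let $J_1,\ldots,J_p$ be subsets of $\{1,\ldots,n\}$, $x_{J_i}=(x_k)_{k\in J_i}$, and $A_i=K[x_{J_i}]_{(x_{J_i})}$, $A'_i=K'[x_{J_i}]_{(x_{J_i})}$ for $i\in\{1,\ldots,p\}$. Set $\mathcal{N}=A_1\times\cdots\times A_p$ and $\mathcal{N}'=A'_1\times\cdots\times A'_p$. Let $f$ be a finite system of polynomials in $K[x]_{(x)}[Y]$, $Y=(Y_1,\ldots,Y_p)$, and let $\hat y\in\mathcal{N}'$ satisfy $f(\hat y)=0$ (in $K'[x]_{(x)}$). Then there exists $y\in\mathcal{N}$ such that $f(y)=0$ and $\operatorname{ord} y_i=\operatorname{ord}\hat y_i$ for all $i\in\{1,\ldots,p\}$.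
   Context: A ring morphism $A\to B$ is called algebraically pure if every finite system of polynomial equations over $A$ which has a solution in $B$ also has a solution in $A$. Here $K[x_{J}]_{(x_J)}$ denotes the localization of the polynomial ring $K[x_J]$ at the maximal ideal generated by the variables $x_J$. For an element $g$ of such a local ring (or of a power series ring), $\operatorname{ord} g$ is its order with respect to the maximal ideal $(x)$, i.e. the largest $k$ with $g\in (x)^k$ (equivalently the least degree of a monomial with nonzero coefficient in its power series expansion), with $\operatorname{ord}0=\infty$. *)

From HB Require Import structures.
From mathcomp Require Import all_boot all_order all_algebra.
From mathcomp Require Import fraction.
From mathcomp Require Import mpoly.
Set Implicit Arguments. Unset Strict Implicit. Unset Printing Implicit Defensive.
Import GRing.Theory.
Local Open Scope ring_scope.

Definition alg_pure (K K' : fieldType) (phi : {rmorphism K -> K'}) : Prop :=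
  forall (m : nat) (eqs : seq {mpoly K[m]}),
    (exists v : 'I_m -> K', all (fun q => (map_mpoly phi q).@[v] == 0) eqs) ->
    exists v : 'I_m -> K, all (fun q => q.@[v] == 0) eqs.

(* The fraction field K(x_1,...,x_n), ambient field of all local rings. *)
Notation FK K n := {fraction {mpoly K[n]}}.

Definition poly_in_vars (K : fieldType) (n : nat) (J : {set 'I_n})
    (P : {mpoly K[n]}) : bool :=
  all (fun m : 'X_{1..n} => [forall i : 'I_n, (i \notin J) ==> (m i == 0%N)])
      (msupp P).

(* z lies in the local ring K[x_J]_(x_J), viewed inside K(x):
   z = P/Q with P, Q in K[x_J] and Q not in (x_J), i.e. Q(0) <> 0. *)
Definition in_loc (K : fieldType) (n : nat) (J : {set 'I_n}) (z : FK K n) : Prop :=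
  exists P Q : {mpoly K[n]},
    [/\ poly_in_vars J P, poly_in_vars J Q, Q@_0%MM != 0 &
        z = tofrac P / tofrac Q].

(* z lies in (x)^k K[x]_(x): z = P/Q with Q(0) <> 0 and every monomial
   of P of total degree >= k. *)
Definition in_mpow (K : fieldType) (n : nat) (k : nat) (z : FK K n) : Prop :=
  exists P Q : {mpoly K[n]},
    [/\ Q@_0%MM != 0, (forall m, m \in msupp P -> (k <= mdeg m)%N) &
        z = tofrac P / tofrac Q].

(* has_ord z o : ord z = o, where None stands for infinity.
   ord z = largest k with z in (x)^k, and ord z = oo if z is in all (x)^k. *)
Definition has_ord (K : fieldType) (n : nat) (z : FK K n) (o : option nat) : Prop :=
  match o with
  | Some k => in_mpow k z /\ ~ in_mpow k.+1 z
  | None => forall k, in_mpow k z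
  end.

Definition map_frac (K K' : fieldType) (phi : {rmorphism K -> K'}) (n : nat)
    (z : FK K n) : FK K' n :=
  let r := repr z in
  tofrac (map_mpoly phi (frac r).1) / tofrac (map_mpoly phi (frac r).2).

From HB Require Import structures.
From mathcomp Require Import all_boot all_order all_algebra.
From mathcomp Require Import fraction.
From mathcomp Require Import mpoly.
Set Implicit Arguments. Unset Strict Implicit. Unset Printing Implicit Defensive.
Import GRing.Theory.
Local Open Scope ring_scope.

(* Write yhat_i = P_i / Q_i with P_i, Q_i in K'[x_{J_i}] and Q_i(0) <> 0, and
   let L be the union of the supports of all P_i and Q_i.  The coefficients of
   the P_i and Q_i on L then solve, in K', a finite polynomial system with
   coefficients in K: Q_i(0) and the coefficient of a lowest-degree monomial
   of P_i are invertible, the coefficients of P_i of smaller degree vanish,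
   and f(P/Q) = 0 becomes, once the denominators of the coefficients of f and
   the Q_i are cleared, the vanishing of finitely many polynomials in the
   unknown coefficients.  Algebraic purity provides a solution in K, that is
   y_i = P_i / Q_i in A_i with f(y) = 0.  As Q_i is a unit of the local ring,
   ord y_i is the degree of a lowest monomial of P_i, which is the same
   monomial as for yhat_i. *)

Lemma frac_reprE (R : idomainType) (z : {fraction R}) :
  z = tofrac \n_(repr z) / tofrac \d_(repr z).
Proof.
have d_neq0 := denom_ratioP (repr z).
rewrite -[LHS]reprK; apply: (canRL (mulfK _)); first by rewrite tofrac_eq0.
unlock tofrac; rewrite -[X in X = _]FracField.pi_mul; apply/eqmodP.
rewrite /= FracField.equivfE /FracField.mulf /=.
by rewrite !numden_Ratio ?mulf_neq0 ?oner_neq0 // !mulr1 mulrC.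
Qed.

Lemma map_frac_id (K : fieldType) n (z : FK K n) : map_frac idfun z = z.
Proof.
have map_id (A : {mpoly K[n]}) : map_mpoly idfun A = A.
  by apply/mpolyP => m; rewrite mcoeff_map_mpoly.
by rewrite /map_frac !map_id -frac_reprE.
Qed.

Lemma mpoly_neq0_mcoeff (R : nzRingType) n (P : {mpoly R[n]}) m : P@_m != 0 -> P != 0.
Proof. by apply: contra => /eqP ->; rewrite mcoeff0. Qed.

Section LowOrder.
Variables (R : idomainType) (n : nat).
Implicit Types (P Q : {mpoly R[n]}) (k : nat).

Definition in_xpow k P := forall s, (mdeg s < k)%N -> P@_s = 0.

Lemma in_xpowM k1 k2 P Q :
  in_xpow k1 P -> in_xpow k2 Q -> in_xpow (k1 + k2) (P * Q).
Proof.
move=> P_k1 Q_k2 s s_lt; rewrite mpolyME raddf_sum /= big_allpairs.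
apply: big1_seq => a /andP[_ a_supp]; apply: big1_seq => b /andP[_ b_supp].
rewrite mcoeffZ mcoeffX; case: eqP => [s_ab|]; last by rewrite mulr0.
have low_deg P' k s' : in_xpow k P' -> s' \in msupp P' -> (k <= mdeg s')%N.
  by move=> P'_k; rewrite mcoeff_msupp leqNgt; apply: contra => /P'_k ->.
move: s_lt; rewrite -s_ab mdegD ltnNge.
by rewrite leq_add ?(low_deg _ _ _ P_k1) ?(low_deg _ _ _ Q_k2).
Qed.

Lemma in_xpow_cancelr k P Q : Q@_0%MM != 0 -> in_xpow k (P * Q) -> in_xpow k P.
Proof.
move=> Q0 PQ_k; elim: k PQ_k => [|k IHk] PQ_k s; first by [].
rewrite ltnS leq_eqVlt => /orP[/eqP s_k|]; last by apply: IHk => t /ltnW /PQ_k.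
have P_k : in_xpow k P by apply: IHk => t /ltnW /PQ_k.
have Q_split : Q = (Q@_0%MM)%:MP + (Q - (Q@_0%MM)%:MP) by rewrite addrC subrK.
have Q1 : in_xpow 1 (Q - (Q@_0%MM)%:MP).
  move=> t; rewrite ltnS leqn0 mdeg_eq0 => /eqP ->.
  by rewrite mcoeffB mcoeffC eqxx mulr1 subrr.
have low_term : (P * (Q - (Q@_0%MM)%:MP))@_s = 0.
  by apply: (in_xpowM P_k Q1); rewrite s_k addn1.
have := PQ_k s; rewrite s_k ltnSn => /(_ isT).
rewrite {1}Q_split mulrDr mcoeffD low_term addr0 mulrC mcoeffCM => /eqP.
by rewrite mulf_eq0 (negbTE Q0) => /eqP.
Qed.

End LowOrder.

Lemma in_mpow_frac (K : fieldType) n k (P Q : {mpoly K[n]}) : Q@_0%MM != 0 ->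
  in_mpow k (tofrac P / tofrac Q) <-> in_xpow k P.
Proof.
move=> Q0; split=> [[P' [Q' [Q'0 P'_k PQ_eq]]]|P_k]; last first.
  exists P, Q; split=> // s; rewrite mcoeff_msupp leqNgt; apply: contra.
  by move=> /P_k ->.
have cross : P * Q' = P' * Q.
  have [Q_neq0 Q'_neq0] := (mpoly_neq0_mcoeff Q0, mpoly_neq0_mcoeff Q'0).
  by apply/eqP; rewrite -tofrac_eq !tofracM -eqr_div ?tofrac_eq0 // PQ_eq.
apply: (in_xpow_cancelr Q'0); rewrite cross -[k]addn0; apply: in_xpowM => // s s_lt.
by apply/eqP; rewrite mcoeff_eq0; apply: contraL s_lt => /P'_k; rewrite leqNgt.
Qed.

Definition lowest_mono (R : idomainType) n (P : {mpoly R[n]}) (lo : option 'X_{1..n}) :=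
  if lo is Some s then P@_s != 0 /\ in_xpow (mdeg s) P else P = 0.

Lemma lowest_mono_exists (R : idomainType) n (P : {mpoly R[n]}) :
  exists lo, lowest_mono P lo.
Proof.
have [->|P_neq0] := eqVneq P 0; first by exists None.
have [s s_supp] : exists s, s \in msupp P.
  case E: (msupp P) => [|s r]; last by exists s; rewrite mem_head.
  by move: P_neq0; rewrite -msupp_eq0 E.
have deg_ex : exists d, has (fun s => mdeg s == d) (msupp P).
  by exists (mdeg s); apply/hasP; exists s.
case: (ex_minnP deg_ex) => d /hasP[s0 s0_supp /eqP s0_d] d_min.
exists (Some s0); split; first by rewrite -mcoeff_msupp.
move=> t; rewrite s0_d => t_lt; apply/eqP; rewrite mcoeff_eq0.
by apply: contraL t_lt => t_supp; rewrite -leqNgt d_min //; apply/hasP; exists t.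
Qed.

Lemma has_ord_frac (K : fieldType) n (P Q : {mpoly K[n]}) lo o :
  Q@_0%MM != 0 -> lowest_mono P lo ->
  has_ord (tofrac P / tofrac Q) o <-> o = omap (@mdeg n) lo.
Proof.
move=> Q0; case: lo => [s [Ps_neq0 P_low]|->] /=.
  have in_mpowE k : in_mpow k (tofrac P / tofrac Q) <-> (k <= mdeg s)%N.
    rewrite in_mpow_frac //; split=> [P_k|k_le t t_lt]; last first.
      by apply: P_low; apply: leq_trans t_lt k_le.
    by rewrite leqNgt; apply: contra Ps_neq0 => /P_k ->.
  case: o => [k|] /=; last by split=> // /(_ (mdeg s).+1) /in_mpowE; rewrite ltnn.
  rewrite !in_mpowE ltnNge; split=> [[k_le /negP]|[->]]; last by rewrite leqnn.
  by rewrite negbK => le_k; congr Some; apply/anti_leq/andP.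
have zero_mpow k : in_mpow k (tofrac (0 : {mpoly K[n]}) / tofrac Q).
  by rewrite in_mpow_frac // => t _; rewrite mcoeff0.
by case: o => [k|] //=; split=> // -[_ []].
Qed.

Definition sum_fracs (S : comNzRingType) (r : seq (S * S)) : S * S :=
  foldr (fun ab nd => (ab.1 * nd.2 + nd.1 * ab.2, ab.2 * nd.2)) (0, 1) r.

Lemma sum_fracsP (S : comNzRingType) (F : fieldType) (sg : {rmorphism S -> F})
    (r : seq (S * S)) :
  all (fun ab => sg ab.2 != 0) r ->
  sg (sum_fracs r).2 != 0 /\
  \sum_(ab <- r) sg ab.1 / sg ab.2 = sg (sum_fracs r).1 / sg (sum_fracs r).2.
Proof.
elim: r => [|ab r IHr] /=; first by rewrite big_nil rmorph0 rmorph1 oner_neq0 mul0r.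
case/andP=> ab_neq0 /IHr[den_neq0 sumE]; rewrite big_cons sumE rmorphM mulf_neq0 //.
by rewrite addf_div // -!rmorphM -rmorphD.
Qed.

Lemma meval_map_mpoly (R : nzRingType) (S : comNzRingType) n (g : R -> S)
    (q : {mpoly R[n]}) (v : 'I_n -> S) :
  (map_mpoly g q).@[v] = \sum_(m <- msupp q) g q@_m * \prod_i v i ^+ m i.
Proof.
rewrite /map_mpoly /mmap raddf_sum /=; apply: eq_bigr => m _.
by rewrite mmap1_id mevalM mevalC mevalX.
Qed.

Lemma meval_map_frac_id (K : fieldType) n p (q : {mpoly (FK K n)[p]})
    (v : 'I_p -> FK K n) :
  (map_mpoly (@map_frac K K idfun n) q).@[v] = q.@[v].
Proof. by rewrite meval_map_mpoly mevalE; apply: eq_bigr => m _; rewrite map_frac_id. Qed.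

Lemma map_mpoly_eq0_msupp (R S : nzRingType) n (g : {additive R -> S})
    (P : {mpoly R[n]}) :
  map_mpoly g P = 0 <-> all (fun m => g P@_m == 0) (msupp P).
Proof.
split=> [gP0|/allP gP0].
  by apply/allP => m _; rewrite -mcoeff_map_mpoly gP0 mcoeff0.
apply/mpolyP => m; rewrite mcoeff_map_mpoly mcoeff0.
have [/gP0/eqP //|] := boolP (m \in msupp P).
by rewrite mcoeff_msupp negbK => /eqP ->; rewrite raddf0.
Qed.

Lemma map_mpoly_eq0 (K F : fieldType) n (g : {rmorphism K -> F}) (P : {mpoly K[n]}) :
  (map_mpoly g P == 0) = (P == 0).
Proof.
apply/eqP/eqP=> [gP0|->]; last exact: raddf0.
apply/mpolyP => m; move/mpolyP/(_ m): gP0.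
by rewrite mcoeff_map_mpoly !mcoeff0 => /eqP; rewrite fmorph_eq0 => /eqP.
Qed.

Section ClearDenominators.
Variables (S : comNzRingType) (p : nat).
Variables (a b : 'X_{1..p} -> S) (P Q : 'I_p -> S) (ms : seq 'X_{1..p}).

Definition cleared_num : S :=
  (sum_fracs [seq (a m * \prod_i P i ^+ m i, b m * \prod_i Q i ^+ m i) | m <- ms]).1.

Lemma cleared_numP (F : fieldType) (sg : {rmorphism S -> F}) :
  (forall m, sg (b m) != 0) -> (forall i, sg (Q i) != 0) ->
  \sum_(m <- ms) sg (a m) / sg (b m) * \prod_i (sg (P i) / sg (Q i)) ^+ m i = 0 <->
  sg cleared_num = 0.
Proof.
move=> b_neq0 Q_neq0.
pose r := [seq (a m * \prod_i P i ^+ m i, b m * \prod_i Q i ^+ m i) | m <- ms].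
have [|den_neq0 sumE] := @sum_fracsP _ _ sg r.
  apply/allP => _ /mapP[m _ ->]; rewrite rmorphM mulf_neq0 // rmorph_prod.
  by apply/prodf_neq0 => i _; rewrite rmorphXn expf_neq0.
rewrite (eq_bigr (fun m => sg (a m * \prod_i P i ^+ m i) / sg (b m * \prod_i Q i ^+ m i))).
  move: sumE; rewrite big_map /cleared_num -/r => ->.
  split=> [/eqP|->]; last by rewrite mul0r.
  by rewrite mulf_eq0 invr_eq0 (negbTE den_neq0) orbF => /eqP.
move=> m _; rewrite !rmorphM !rmorph_prod -mulf_div -prodf_div; congr (_ * _).
by apply: eq_bigr => i _; rewrite !rmorphXn expr_div_n.
Qed.
End ClearDenominators.

Definition supp_in n (J : {set 'I_n}) (t : 'X_{1..n}) : bool :=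
  [forall k, (k \notin J) ==> (t k == 0%N)].

Section GenericSystem.
Variables (K : fieldType) (n p : nat) (J : 'I_p -> {set 'I_n}).
Variables (L : seq 'X_{1..n}) (lo : 'I_p -> option 'X_{1..n}).
Variable f : seq {mpoly (FK K n)[p]}.

(* The unknowns are the coefficients of the generic numerator (b = true) and
   denominator (b = false) of y_i at the monomials of L, plus, for each i, two
   unknowns whose equations a * b - 1 = 0 below force the lowest coefficient
   of the numerator and the constant term of the denominator to be units. *)
Definition unknown := (('I_p * bool * seq_sub L) + ('I_p * bool))%type.
Local Notation U := {mpoly K[#|{: unknown}|]}.
Definition var (t : unknown) : U := 'X_(enum_rank t).

Definition gen_range (i : 'I_p) (b : bool) : pred 'X_{1..n} := [pred t |
  [&& t \in L, supp_in (J i) t &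
      b ==> if lo i is Some s then (mdeg s <= mdeg t)%N else false]].

Definition gen_poly i b : {mpoly U[n]} :=
  \sum_(s : seq_sub L | val s \in gen_range i b) var (inl (i, b, s)) *: 'X_[val s].

Lemma mcoeff_gen_poly i b (s : seq_sub L) :
  val s \in gen_range i b -> (gen_poly i b)@_(val s) = var (inl (i, b, s)).
Proof.
move=> s_range; rewrite raddf_sum /= (bigD1 s) //= mcoeffZ mcoeffX eqxx mulr1.
rewrite big1 ?addr0 // => s' /andP[_ s'_neq]; rewrite mcoeffZ mcoeffX.
by rewrite inj_eq ?(negbTE s'_neq) ?mulr0 //; apply: val_inj.
Qed.

Lemma mcoeff_gen_poly_out i b t : t \notin gen_range i b -> (gen_poly i b)@_t = 0.
Proof.
move=> t_out; rewrite raddf_sum big1 //= => s s_range; rewrite mcoeffZ mcoeffX.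
by case: eqP => [s_t|]; [move: t_out; rewrite -s_t s_range | rewrite mulr0].
Qed.

Lemma gen_poly_in_vars (F : fieldType) (ev : {additive U -> F}) i b :
  poly_in_vars (J i) (map_mpoly ev (gen_poly i b)).
Proof.
apply/allP => t; rewrite mcoeff_msupp mcoeff_map_mpoly; apply: contraR => t_out.
by rewrite mcoeff_gen_poly_out ?raddf0 // inE /supp_in (negbTE t_out) andbF.
Qed.

Lemma gen_poly_low (F : idomainType) (ev : {additive U -> F}) i s :
  lo i = Some s -> in_xpow (mdeg s) (map_mpoly ev (gen_poly i true)).
Proof.
move=> lo_i t t_lt; rewrite mcoeff_map_mpoly mcoeff_gen_poly_out ?raddf0 //.
by rewrite inE lo_i leqNgt t_lt !andbF.
Qed.

Lemma gen_poly_lo_None i : lo i = None -> gen_poly i true = 0.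
Proof.
move=> lo_i; apply/mpolyP => t; rewrite mcoeff0 mcoeff_gen_poly_out //.
by rewrite inE lo_i !andbF.
Qed.

Definition den_eq i : U := var (inr (i, false)) * (gen_poly i false)@_0%MM - 1.

Definition lead_eq i : U :=
  if lo i is Some s then var (inr (i, true)) * (gen_poly i true)@_s - 1 else 0.

Local Notation const A := (map_mpoly (@mpolyC #|{: unknown}| K) A).

Definition cleared (q : {mpoly (FK K n)[p]}) : {mpoly U[n]} :=
  cleared_num (fun m => const \n_(repr q@_m)) (fun m => const \d_(repr q@_m))
    (gen_poly ^~ true) (gen_poly ^~ false) (msupp q).

Definition system : seq U :=
  [seq den_eq i | i <- enum 'I_p] ++ [seq lead_eq i | i <- enum 'I_p] ++
  [seq (cleared q)@_m | q <- f, m <- msupp (cleared q)].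

Lemma systemP (F : nzRingType) (ev : {rmorphism U -> F}) :
  all (fun e => ev e == 0) system <->
  [/\ forall i, ev (den_eq i) = 0, forall i, ev (lead_eq i) = 0 &
      forall q, q \in f -> map_mpoly ev (cleared q) = 0].
Proof.
rewrite /system !all_cat !all_map.
split=> [/and3P[/allP den0 /allP lead0 /all_allpairsP cleared0]|[den0 lead0 cleared0]].
  split=> [i|i|q q_f].
  - by apply/eqP/den0; rewrite mem_index_enum.
  - by apply/eqP/lead0; rewrite mem_index_enum.
  - by apply/(map_mpoly_eq0_msupp ev)/allP => m m_supp; apply: cleared0.
apply/and3P; split.
- by apply/allP => i _; rewrite /= den0.
- by apply/allP => i _; rewrite /= lead0.
- apply/all_allpairsP => q m q_f.
  by move/(map_mpoly_eq0_msupp ev)/allP: (cleared0 q q_f); apply.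
Qed.

Local Notation gen_val ev i b := (map_mpoly ev (gen_poly i b)).

Definition gen_frac (F : fieldType) (ev : {rmorphism U -> F}) i : FK F n :=
  tofrac (gen_val ev i true) / tofrac (gen_val ev i false).

Lemma gen_val_lowest (F : fieldType) (ev : {rmorphism U -> F}) i :
  ev (den_eq i) = 0 -> ev (lead_eq i) = 0 ->
  (gen_val ev i false)@_0%MM != 0 /\ lowest_mono (gen_val ev i true) (lo i).
Proof.
have unit_r a b : ev (a * b - 1) = 0 -> ev b != 0.
  rewrite rmorphB rmorph1 rmorphM => /eqP; rewrite subr_eq0.
  by apply: contraTneq => ->; rewrite mulr0 eq_sym oner_eq0.
rewrite /den_eq /lead_eq mcoeff_map_mpoly => /unit_r ->.
case lo_i: (lo i) => [s|] lead0 /=; last by rewrite (gen_poly_lo_None lo_i) raddf0.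
by split=> //; split; [rewrite mcoeff_map_mpoly; apply: unit_r lead0 | apply: gen_poly_low].
Qed.

Lemma map_const (F : nzRingType) (ev : {rmorphism U -> F}) (g : {rmorphism K -> F})
    (A : {mpoly K[n]}) :
  (forall c, ev c%:MP = g c) -> map_mpoly ev (const A) = map_mpoly g A.
Proof.
by move=> ev_const; apply/mpolyP => t; rewrite !mcoeff_map_mpoly; apply: ev_const.
Qed.

Lemma meval_cleared (F : fieldType) (ev : {rmorphism U -> F}) (g : {rmorphism K -> F})
    (q : {mpoly (FK K n)[p]}) :
  (forall c, ev c%:MP = g c) -> (forall i, gen_val ev i false != 0) ->
  (map_mpoly (@map_frac K F g n) q).@[gen_frac ev] = 0 <-> map_mpoly ev (cleared q) = 0.
Proof.
move=> ev_const Q_neq0.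
pose sg := (@tofrac _ \o map_mpoly ev) : {rmorphism {mpoly U[n]} -> FK F n}.
rewrite meval_map_mpoly (eq_bigr (fun m =>
    sg (const \n_(repr q@_m)) / sg (const \d_(repr q@_m)) *
    \prod_i (sg (gen_poly i true) / sg (gen_poly i false)) ^+ m i)); last first.
  by move=> m _; congr (_ * _); rewrite /map_frac -!(map_const _ ev_const).
apply: iff_trans (cleared_numP (sg := sg) _ _ _ _ _) _ => [m|i|].
- rewrite -[sg _]/(tofrac (map_mpoly ev _)) tofrac_eq0 (map_const _ ev_const).
  by rewrite map_mpoly_eq0 denom_ratioP.
- by rewrite -[sg _]/(tofrac (gen_val ev i false)) tofrac_eq0.
- rewrite -[sg _]/(tofrac (map_mpoly ev (cleared q))).
  by split=> [/eqP|->]; rewrite ?raddf0 // tofrac_eq0 => /eqP.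
Qed.

Lemma gen_frac_solution (ev : {rmorphism U -> K}) :
  (forall c, ev c%:MP = c) -> all (fun e => ev e == 0) system ->
  [/\ forall i, in_loc (J i) (gen_frac ev i),
      forall q, q \in f -> q.@[gen_frac ev] = 0 &
      forall i o, has_ord (gen_frac ev i) o <-> o = omap (@mdeg n) (lo i)].
Proof.
move=> ev_id /systemP[den0 lead0 cleared0].
have loc i := gen_val_lowest (den0 i) (lead0 i).
split=> [i|q q_f|i o]; last by have [Q0 P_low] := loc i; apply: has_ord_frac.
  have [Q0 _] := loc i; exists (gen_val ev i true), (gen_val ev i false).
  by split=> //; apply: gen_poly_in_vars.
rewrite -meval_map_frac_id; apply/(meval_cleared (g := idfun)) => [//|i|].
  by have [Q0 _] := loc i; apply: mpoly_neq0_mcoeff Q0.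
exact: cleared0.
Qed.

Lemma msupp_gen_range (F : fieldType) i (b : bool) (G : {mpoly F[n]}) :
  {subset msupp G <= L} -> poly_in_vars (J i) G -> (b -> lowest_mono G (lo i)) ->
  {subset msupp G <= gen_range i b}.
Proof.
move=> G_L /allP G_J G_low t t_supp; rewrite inE G_L //= /supp_in G_J //=.
case: b G_low => // /(_ isT); case: (lo i) => [s [_ G_s]|G0]; last first.
  by move: t_supp; rewrite G0 mcoeff_msupp mcoeff0 eqxx.
rewrite leqNgt; apply: contraL t_supp => /G_s.
by rewrite mcoeff_msupp => ->; rewrite eqxx.
Qed.

Lemma system_lift (F : fieldType) (g : {rmorphism K -> F}) (P Q : 'I_p -> {mpoly F[n]}) :
  (forall i, {subset msupp (P i) <= gen_range i true}) ->
  (forall i, {subset msupp (Q i) <= gen_range i false}) ->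
  (forall i, (Q i)@_0%MM != 0) -> (forall i, lowest_mono (P i) (lo i)) ->
  (forall q, q \in f ->
     (map_mpoly (@map_frac K F g n) q).@[fun i => tofrac (P i) / tofrac (Q i)] = 0) ->
  exists v, all (fun e => (map_mpoly g e).@[v] == 0) system.
Proof.
move=> P_range Q_range Q0 P_low sol.
pose w (t : unknown) : F := match t with
  | inl (i, b, s) => (if b then P i else Q i)@_(val s)
  | inr (i, true) => if lo i is Some s then ((P i)@_s)^-1 else 0
  | inr (i, false) => ((Q i)@_0%MM)^-1
  end.
exists (fun k => w (enum_val k)).
pose ev := (meval (fun k => w (enum_val k)) \o map_mpoly g) : {rmorphism U -> F}.
have ev_var t : ev (var t) = w t by rewrite /= map_mpolyX mevalXU enum_rankK.
have gen_valE i b : gen_val ev i b = if b then P i else Q i.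
  apply/mpolyP => t; rewrite mcoeff_map_mpoly.
  have [t_range|t_out] := boolP (t \in gen_range i b).
    have [t_L _] := andP t_range; have -> : t = val (SeqSub t_L) by [].
    by rewrite mcoeff_gen_poly //; apply: ev_var.
  rewrite mcoeff_gen_poly_out // raddf0; apply/esym/eqP; rewrite mcoeff_eq0.
  by apply: contra t_out; case: b; [apply: P_range | apply: Q_range].
apply/(systemP ev); split=> [i|i|q q_f].
- rewrite /den_eq rmorphB rmorphM rmorph1 ev_var -mcoeff_map_mpoly gen_valE /=.
  by rewrite mulVf ?subrr.
- rewrite /lead_eq; case lo_i: (lo i) => [s|]; last exact: raddf0.
  rewrite rmorphB rmorphM rmorph1 ev_var -mcoeff_map_mpoly gen_valE /= lo_i.
  by have := P_low i; rewrite lo_i => -[Ps_neq0 _]; rewrite mulVf ?subrr.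
- apply/(meval_cleared (g := g)) => [c|i|].
  + by rewrite /= map_mpolyC mevalC.
  + by rewrite gen_valE; apply: mpoly_neq0_mcoeff (Q0 i).
  + by rewrite -(sol q q_f); apply: meval_eq => i; rewrite /gen_frac !gen_valE.
Qed.

End GenericSystem.

Theorem proposition1p2 (K K' : fieldType) (phi : {rmorphism K -> K'})
    (Hpure : alg_pure phi) (n p : nat) (J : 'I_p -> {set 'I_n})
    (f : seq {mpoly (FK K n)[p]})
    (Hf : forall q, q \in f -> forall m, m \in msupp q -> in_loc [set: 'I_n] q@_m)
    (yhat : 'I_p -> FK K' n)
    (Hyhat : forall i, in_loc (J i) (yhat i))
    (Hsol : forall q, q \in f -> (map_mpoly (@map_frac K K' phi n) q).@[yhat] = 0) :
  exists y : 'I_p -> FK K n,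
    [/\ forall i, in_loc (J i) (y i),
        forall q, q \in f -> q.@[y] = 0 &
        forall i (o : option nat), has_ord (y i) o <-> has_ord (yhat i) o].
Proof.
have [P' /fin_all_exists[Q' yhat_loc]] := fin_all_exists Hyhat.
have [lo P'_low] := fin_all_exists (fun i => lowest_mono_exists (P' i)).
pose L := flatten [seq msupp (P' i) ++ msupp (Q' i) | i <- enum 'I_p].
have L_supp i : {subset msupp (P' i) ++ msupp (Q' i) <= L}.
  by move=> t t_supp; apply/flatten_mapP; exists i; rewrite ?mem_enum.
have P'_range i : {subset msupp (P' i) <= gen_range J L lo i true}.
  have [P'_J _ _ _] := yhat_loc i; apply: (msupp_gen_range _ P'_J (fun _ => P'_low i)).
  by move=> t t_supp; apply: (L_supp i); rewrite mem_cat t_supp.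
have Q'_range i : {subset msupp (Q' i) <= gen_range J L lo i false}.
  have [_ Q'_J _ _] := yhat_loc i; apply: (msupp_gen_range _ Q'_J) => //.
  by move=> t t_supp; apply: (L_supp i); rewrite mem_cat t_supp orbT.
have [v' sys'] :
    exists v', all (fun e => (map_mpoly phi e).@[v'] == 0) (system J L lo f).
  apply: (system_lift P'_range Q'_range) => [i|//|q q_f].
    by have [] := yhat_loc i.
  by rewrite -(Hsol q q_f); apply: meval_eq => i; have [_ _ _ ->] := yhat_loc i.
have [v sys] := Hpure _ _ (ex_intro _ v' sys').
have [y_loc y_sol y_ord] := gen_frac_solution (ev := meval v) (mevalC v) sys.
exists (gen_frac J lo (meval v)); split=> // i o.
have [_ _ Q'0 ->] := yhat_loc i.
by rewrite y_ord (has_ord_frac _ Q'0 (P'_low i)).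
Qed.
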